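(* Let $q$ be a prime power, $n\ge1$, and $d,m$ positive integers. There exists an equidistant linear code $\mathcal{U}\subseteq\mathbb{P}_q(n)$ with constant distance $2d$ and $|\mathcal{U}|=2^m$ if and only if there exists a $d$-intersecting family $\mathcal{F}\subseteq\mathbb{G}_q(n,2d)$ with $|\mathcal{F}|=2^m-1$.
   Context: $\mathbb{P}_q(n)$ denotes the set of all subspaces of $\mathbb{F}_q^n$ and $\mathbb{G}_q(n,k)$ the set of $k$-dimensional subspaces. For subspaces $X,Y$ the subspace distance is $d_S(X,Y)=\dim X+\dim Y-2\dim(X\cap Y)$. A linear code in $\mathbb{P}_q(n)$ is a subset $\mathcal{U}\subseteq\mathbb{P}_q(n)$ with $\{0\}\in\mathcal{U}$ for which there exists a map $\boxplus:\mathcal{U}\times\mathcal{U}\to\mathcal{U}$ such that (i) $(\mathcal{U},\boxplus)$ is an abelian group; (ii) its identity element is $\{0\}$; (iii) $X\boxplus X=\{0\}$ for all $X\in\mathcal{U}$; (iv) $d_S(Y_1\boxplus X,Y_2\boxplus X)=d_S(Y_1,Y_2)$ for all $Y_1,Y_2,X\in\mathcal{U}$. It is equidistant with constant distance $r$ if $d_S(X,Y)=r$ for all distinct $X,Y\in\mathcal{U}$. A family $\mathcal{F}$ of subspaces is $\lambda$-intersecting if $\dim(X\cap Y)=\lambda$ for all distinct $X,Y\in\mathcal{F}$. *)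

From mathcomp Require Import all_boot all_algebra.
Set Implicit Arguments. Unset Strict Implicit. Unset Printing Implicit Defensive.
Import GRing.Theory.
Local Open Scope ring_scope.

(* The ambient space F_q^n is 'rV[F]_n for a finite field F (|F| = q);
   subspaces are {vspace 'rV[F]_n}.  A finite family of subspaces is
   represented by a duplicate-free sequence. *)

Notation subsp F n := {vspace 'rV[F]_n}.

Definition dS (F : fieldType) (n : nat) (X Y : subsp F n) : nat :=
  (\dim X + \dim Y - 2 * \dim (X :&: Y))%N.

Definition linear_code (F : fieldType) (n : nat) (U : seq (subsp F n)) : Prop :=
  (0%VS \in U) /\
  exists bp : subsp F n -> subsp F n -> subsp F n,
    {in U &, forall X Y, bp X Y \in U} /\
    (forall X Y Z, X \in U -> Y \in U -> Z \in U -> bp X (bp Y Z) = bp (bp X Y) Z) /\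
    {in U &, forall X Y, bp X Y = bp Y X} /\
    {in U, forall X, bp 0%VS X = X /\ bp X 0%VS = X} /\
    {in U, forall X, exists2 Y, Y \in U & bp X Y = 0%VS} /\
    {in U, forall X, bp X X = 0%VS} /\
    (forall Y1 Y2 X, Y1 \in U -> Y2 \in U -> X \in U ->
          dS (bp Y1 X) (bp Y2 X) = dS Y1 Y2).

Definition equidistant (F : fieldType) (n : nat) (U : seq (subsp F n)) (r : nat) : Prop :=
  {in U &, forall X Y, X != Y -> dS X Y = r}.

Definition lambda_intersecting (F : fieldType) (n : nat) (Fm : seq (subsp F n)) (l : nat) : Prop :=
  {in Fm &, forall X Y, X != Y -> \dim (X :&: Y) = l}.

(* Adding {0} to a d-intersecting family of 2d-dimensional subspaces gives a
   family in which any two members are at distance 2d, and conversely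
   removing {0} from such a family leaves 2d-dimensional subspaces meeting
   pairwise in dimension d.  An equidistant family of size 2^m containing
   {0} is always a linear code: number its members 0, ..., 2^m - 1 with {0}
   first and add them by XOR of their indices.  Every translation is then a
   bijection of the family, and a bijection of an equidistant family
   preserves distances. *)

From Stdlib Require Import Arith.
From mathcomp Require Import all_boot all_algebra.
From mathcomp Require Import zify.

Set Implicit Arguments.
Unset Strict Implicit.
Unset Printing Implicit Defensive.

Lemma expn_Natpow (a b : nat) : (a ^ b)%N = Nat.pow a b.
Proof. by elim: b => // b IHb; rewrite expnS IHb. Qed.

Lemma lxor_ltn_pow2 (m a b : nat) :
  (a < 2 ^ m)%N -> (b < 2 ^ m)%N -> (Nat.lxor a b < 2 ^ m)%N.
Proof.
have pow2_neq0 : Nat.pow 2 m <> 0 by apply: Nat.pow_nonzero.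
rewrite expn_Natpow => /ltP a_lt /ltP b_lt; apply/ltP.
apply/(Nat.div_small_iff _ _ pow2_neq0).
rewrite -Nat.shiftr_div_pow2 Nat.shiftr_lxor !Nat.shiftr_div_pow2.
by rewrite !(proj2 (Nat.div_small_iff _ _ pow2_neq0)).
Qed.

Lemma lxor_injr (c : nat) : injective (Nat.lxor^~ c).
Proof.
move=> a b /(congr1 (Nat.lxor^~ c)).
by rewrite !Nat.lxor_assoc Nat.lxor_nilpotent !Nat.lxor_0_r.
Qed.

Section SubspaceDistance.

Variables (F : fieldType) (n : nat).
Implicit Types (X Y : subsp F n) (U : seq (subsp F n)).

Lemma dSv0 X : dS X 0%VS = \dim X.
Proof. by rewrite /dS capv0 dimv0 muln0 addn0 subn0. Qed.

Lemma dS0v X : dS 0%VS X = \dim X.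
Proof. by rewrite /dS cap0v dimv0 muln0 add0n subn0. Qed.

Lemma dSvv X : dS X X = 0%N.
Proof. by rewrite /dS capvv; apply/eqP; rewrite subn_eq0 mul2n -addnn. Qed.

Lemma dS_eq_dim X Y :
  \dim X = \dim Y -> dS X Y = (2 * (\dim X - \dim (X :&: Y)))%N.
Proof. by rewrite /dS => <-; have := dimvS (capvSl X Y); lia. Qed.

Lemma equidistant_sub U V r :
  {subset V <= U} -> equidistant U r -> equidistant V r.
Proof. by move=> sVU eqU X Y /sVU XU /sVU YU; apply: eqU. Qed.

Lemma equidistant_dim U r X :
  equidistant U r -> 0%VS \in U -> X \in U -> X != 0%VS -> \dim X = r.
Proof. by move=> eqU U0 XU X_neq0; rewrite -dSv0 eqU. Qed.

Lemma equidistant_cons0 U r :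
  {in U, forall X, \dim X = r} -> equidistant U r -> equidistant (0%VS :: U) r.
Proof.
move=> dimU eqU X Y; rewrite !inE.
case/predU1P=> [-> | XU] /predU1P [-> | YU]; rewrite ?eqxx //.
- by rewrite dS0v dimU.
- by rewrite dSv0 dimU.
- exact: eqU.
Qed.

Lemma equidistant_intersectingE U d :
  {in U, forall X, \dim X = (2 * d)%N} ->
  equidistant U (2 * d) <-> lambda_intersecting U d.
Proof.
move=> dimU; split=> [eqU | capU] X Y XU YU XY.
- have := eqU X Y XU YU XY; have := dimvS (capvSl X Y).
  by rewrite dS_eq_dim ?(dimU X) //; [lia | rewrite !dimU].
- by rewrite dS_eq_dim ?(dimU X) ?capU //; [lia | rewrite !dimU].
Qed.

Lemma equidistant_dS_inj U r (f : subsp F n -> subsp F n) :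
  equidistant U r -> {in U, forall X, f X \in U} -> {in U &, injective f} ->
  {in U &, forall Y1 Y2, dS (f Y1) (f Y2) = dS Y1 Y2}.
Proof.
move=> eqU fU f_inj Y1 Y2 Y1U Y2U.
have [-> | Y12] := eqVneq Y1 Y2; first by rewrite !dSvv.
have fY12 : f Y1 != f Y2 by apply: contra_neq Y12; apply: f_inj.
by rewrite !eqU ?fU.
Qed.

End SubspaceDistance.

Section XorOnIndices.

Variables (F : fieldType) (n m : nat) (U : seq (subsp F n)).
Hypotheses (U_uniq : uniq U) (size_U : size U = (2 ^ m)%N).

Definition index_lxor (X Y : subsp F n) : subsp F n :=
  nth 0%VS U (Nat.lxor (index X U) (index Y U)).

Lemma index_lxor_ltn X Y :
  X \in U -> Y \in U -> (Nat.lxor (index X U) (index Y U) < size U)%N.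
Proof. by rewrite -!index_mem size_U; apply: lxor_ltn_pow2. Qed.

Lemma index_lxor_mem : {in U &, forall X Y, index_lxor X Y \in U}.
Proof. by move=> X Y XU YU; apply/mem_nth/index_lxor_ltn. Qed.

Lemma index_index_lxor X Y : X \in U -> Y \in U ->
  index (index_lxor X Y) U = Nat.lxor (index X U) (index Y U).
Proof. by move=> XU YU; rewrite index_uniq // index_lxor_ltn. Qed.

Lemma index_lxorA X Y Z : X \in U -> Y \in U -> Z \in U ->
  index_lxor X (index_lxor Y Z) = index_lxor (index_lxor X Y) Z.
Proof. by move=> XU YU ZU; rewrite /index_lxor !index_index_lxor // Nat.lxor_assoc. Qed.

Lemma index_lxorC X Y : index_lxor X Y = index_lxor Y X.
Proof. by rewrite /index_lxor Nat.lxor_comm. Qed.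

Lemma index_lxorvv X : index_lxor X X = nth 0%VS U 0.
Proof. by rewrite /index_lxor Nat.lxor_nilpotent. Qed.

Lemma index_lxor_injl X : X \in U -> {in U &, injective (index_lxor^~ X)}.
Proof.
move=> XU Y1 Y2 Y1U Y2U /(congr1 (index^~ U)).
by rewrite !index_index_lxor // => /lxor_injr /(congr1 (nth 0%VS U)); rewrite !nth_index.
Qed.

Lemma equidistant_linear_code r :
  nth 0%VS U 0 = 0%VS -> equidistant U r -> linear_code U.
Proof.
move=> U_0 eqU; have U0 : 0%VS \in U by rewrite -U_0 mem_nth // size_U expn_gt0.
have index0 : index 0%VS U = 0%N by rewrite -U_0 index_uniq // size_U expn_gt0.
split=> //; exists index_lxor; split; first exact: index_lxor_mem.
split; first exact: index_lxorA.
split; first by move=> X Y _ _; apply: index_lxorC.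
split.
  by move=> X XU; rewrite index_lxorC /index_lxor index0 Nat.lxor_0_r nth_index.
split; first by move=> X XU; exists X; rewrite // index_lxorvv.
split; first by move=> X XU; rewrite index_lxorvv.
move=> Y1 Y2 X Y1U Y2U XU.
rewrite (equidistant_dS_inj (f := index_lxor^~ X) eqU) //.
  by move=> Y YU; apply: index_lxor_mem.
exact: index_lxor_injl.
Qed.

End XorOnIndices.

Theorem theorem10 (F : finFieldType) (n d m : nat) :
  (1 <= n)%N -> (0 < d)%N -> (0 < m)%N ->
  (exists U : seq {vspace 'rV[F]_n},
      [/\ uniq U, linear_code U, equidistant U (2 * d) & size U = 2 ^ m])
  <->
  (exists Fm : seq {vspace 'rV[F]_n},
      [/\ uniq Fm, all (fun X => \dim X == 2 * d)%N Fm,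
          lambda_intersecting Fm d & size Fm = (2 ^ m).-1]).
Proof.
move=> _ d_gt0 _; split.
- case=> U [U_uniq [U0 _] eqU size_U]; exists (rem 0%VS U).
  have memU X : (X \in rem 0%VS U) = (X != 0%VS) && (X \in U).
    by rewrite mem_rem_uniq ?inE.
  have dimU : {in rem 0%VS U, forall X, \dim X = (2 * d)%N}.
    by move=> X; rewrite memU => /andP [X_neq0 XU]; apply: (equidistant_dim eqU).
  split; [exact: rem_uniq | by apply/allP => X /dimU -> | | by rewrite size_rem ?size_U].
  apply/equidistant_intersectingE => //; apply: equidistant_sub eqU.
  by move=> X; rewrite memU => /andP [].
- case=> Fm [Fm_uniq /allP dimFm capFm size_Fm].
  have {}dimFm : {in Fm, forall X, \dim X = (2 * d)%N} by move=> X /dimFm /eqP.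
  have Fm0 : 0%VS \notin Fm by apply/negP => /dimFm; rewrite dimv0; lia.
  have U_uniq : uniq (0%VS :: Fm) by rewrite /= Fm0.
  have size_U : size (0%VS :: Fm) = (2 ^ m)%N by rewrite /= size_Fm prednK ?expn_gt0.
  have eqU : equidistant (0%VS :: Fm) (2 * d).
    by apply: equidistant_cons0 => //; apply/equidistant_intersectingE.
  by exists (0%VS :: Fm); split=> //; apply: (equidistant_linear_code U_uniq size_U _ eqU).
Qed.
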